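(* Let $(\alpha,\beta)$ be an admissible, non-null pair and assume there is no $x\in(0,1)$ with $\pi_x(\alpha)=\pi_x(\beta)$. Then for every $a\in(1,2]$ there is a $p$ with $1-1/a\le p\le 1/a$ such that $f_{(a,p,+)}(\pi_{1/a}(\omega))=\pi_{1/a}(S\omega)$ for all $\omega\in\Omega_{(\alpha,\beta,+)}$ and $f_{(a,p,-)}(\pi_{1/a}(\omega))=\pi_{1/a}(S\omega)$ for all $\omega\in\Omega_{(\alpha,\beta,-)}$.
   Context: For $1<a\le2$, $1-\frac1a\le p\le\frac1a$: $f_{(a,p,-)}(x)=ax$ if $x\le p$, $ax+(1-a)$ if $x>p$; $f_{(a,p,+)}(x)=ax$ if $x<p$, $ax+(1-a)$ if $x\ge p$. $\Omega=\{0,1\}^\infty$ (infinite binary strings $\omega_0\omega_1\cdots$), $S$ the left shift, $\preceq$ the lexicographic order with intervals $[\alpha,\beta]=\{\omega:\alpha\preceq\omega\preceq\beta\}$ and half-open analogues. $(\alpha,\beta)$ is admissible if $\alpha_0=0,\alpha_1=1,\beta_0=1,\beta_1=0$ and $S^n\alpha\notin(\alpha,\beta]$, $S^n\beta\notin[\alpha,\beta)$ for all $n\ge0$. $\Omega_{(\alpha,\beta,-)}=\{\omega:S^n\omega\notin(\alpha,\beta]\ \forall n\ge0\}$, $\Omega_{(\alpha,\beta,+)}=\{\omega:S^n\omega\notin[\alpha,\beta)\ \forall n\ge0\}$, $\Omega_{(\alpha,\beta)}$ their union. With $\Gamma_n=\{\omega_0\cdots\omega_n:\omega\in\Gamma\}$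 and $h(\Gamma)=\limsup_n\frac1n\ln|\Gamma_n|$, the pair is non-null if $h(\Omega_{(\alpha,\beta)})>0$. Projection: $\pi_x(\omega)=(1-x)\sum_{k\ge0}\omega_kx^k$ for $x\in[0,1)$. *)

From Stdlib Require Import Reals Lra List ClassicalDescription.
From Coquelicot Require Import Coquelicot.
Open Scope R_scope.

Definition Omega := nat -> bool.

Definition S_shift (w : Omega) : Omega := fun n => w (S n).

Definition lex_lt (w v : Omega) : Prop :=
  exists n, (forall k, (k < n)%nat -> w k = v k) /\ w n = false /\ v n = true.
Definition lex_le (w v : Omega) : Prop := lex_lt w v \/ w = v.

Definition in_oc (a b w : Omega) : Prop := lex_lt a w /\ lex_le w b.
Definition in_co (a b w : Omega) : Prop := lex_le a w /\ lex_lt w b.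

Definition admissible (a b : Omega) : Prop :=
  a 0%nat = false /\ a 1%nat = true /\ b 0%nat = true /\ b 1%nat = false /\
  (forall n, ~ in_oc a b (Nat.iter n S_shift a)) /\
  (forall n, ~ in_co a b (Nat.iter n S_shift b)).

Definition Omega_minus (a b : Omega) (w : Omega) : Prop :=
  forall n, ~ in_oc a b (Nat.iter n S_shift w).
Definition Omega_plus (a b : Omega) (w : Omega) : Prop :=
  forall n, ~ in_co a b (Nat.iter n S_shift w).
Definition Omega_ab (a b : Omega) (w : Omega) : Prop :=
  Omega_minus a b w \/ Omega_plus a b w.

Fixpoint words (n : nat) : list (list bool) :=
  match n with
  | O => nil :: nil
  | S m => map (cons false) (words m) ++ map (cons true) (words m)
  end.

Definition prefix (w : Omega) (n : nat) : list bool := map w (seq 0 n).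

Definition n_prefixes (G : Omega -> Prop) (n : nat) : nat :=
  length (filter
    (fun u => if excluded_middle_informative (exists w, G w /\ prefix w (S n) = u)
              then true else false) (words (S n))).

Definition entropy (G : Omega -> Prop) : Rbar :=
  LimSup_seq (fun n => ln (INR (n_prefixes G n)) / INR n).

Definition non_null (a b : Omega) : Prop := Rbar_lt 0 (entropy (Omega_ab a b)).

Definition b2R (x : bool) : R := if x then 1 else 0.

Definition proj (x : R) (w : Omega) : R :=
  (1 - x) * Series (fun k => b2R (w k) * x ^ k).

Definition f_minus (a p x : R) : R :=
  if Rle_dec x p then a * x else a * x + (1 - a).
Definition f_plus (a p x : R) : R :=
  if Rlt_dec x p then a * x else a * x + (1 - a).

From Stdlib Require Import Reals Lra Lia Wf_nat FunctionalExtensionality.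
From Coquelicot Require Import Coquelicot.
Open Scope R_scope.

(* At y = 1/2 every word starting with 0 projects to the left of every word
   starting with 1.  This separation propagates along [1/2, 1): while
   pi_y(alpha) < pi_y(beta), cutting a word at its first difference with alpha
   (resp. beta) shows that words of the subshift starting with 0 project at most
   to pi_y(alpha) and those starting with 1 at least to pi_y(beta), a gap that is
   stable under small changes of y; at a limit point the gap cannot close since
   pi_y(alpha) <> pi_y(beta).  For y = 1/a we have
   pi(S w) = a pi(w) - (a - 1) w_0, so any threshold p in
   [pi(alpha), pi(beta)] /\ [1 - 1/a, 1/a] makes f_(a,p,+-) act as the shift. *)

Lemma Series_nonneg (a : nat -> R) :
  (forall n, 0 <= a n) -> ex_series a -> 0 <= Series a.
Proof.
  intros Ha Hex. rewrite <- (Rmult_0_l (Series a)), <- Series_scal_l.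
  apply Series_le; [|exact Hex]. intros n. specialize (Ha n). lra.
Qed.

Lemma is_series_pow (y : R) : 0 <= y < 1 -> is_series (fun k => y ^ k) (/ (1 - y)).
Proof. intros Hy. apply is_series_geom. rewrite Rabs_pos_eq; lra. Qed.

Lemma b2R_bounds (b : bool) : 0 <= b2R b <= 1.
Proof. destruct b; simpl; lra. Qed.

Lemma digit_term_bounds (w : Omega) (y : R) (k : nat) :
  0 <= y -> 0 <= b2R (w k) * y ^ k <= y ^ k.
Proof.
  intros Hy. pose proof (b2R_bounds (w k)). pose proof (pow_le y k Hy). nra.
Qed.

Lemma ex_series_digits (w : Omega) (y : R) :
  0 <= y < 1 -> ex_series (fun k => b2R (w k) * y ^ k).
Proof.
  intros Hy. apply (@ex_series_le R_AbsRing R_CompleteNormedModule _ (fun k => y ^ k)).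
  - intros n. change norm with Rabs. simpl.
    pose proof (digit_term_bounds w y n ltac:(lra)). rewrite Rabs_pos_eq; lra.
  - eexists. now apply is_series_pow.
Qed.

Lemma Series_digits_bounds (w : Omega) (y : R) :
  0 <= y < 1 -> 0 <= Series (fun k => b2R (w k) * y ^ k) <= / (1 - y).
Proof.
  intros Hy. split.
  - apply Series_nonneg; [|now apply ex_series_digits].
    intros n. apply digit_term_bounds. lra.
  - rewrite <- (is_series_unique _ _ (is_series_pow y Hy)).
    apply Series_le; [|eexists; now apply is_series_pow].
    intros n. apply digit_term_bounds. lra.
Qed.

Lemma proj_bounds (w : Omega) (y : R) : 0 <= y < 1 -> 0 <= proj y w <= 1.
Proof.
  intros Hy. unfold proj. pose proof (Series_digits_bounds w y Hy) as [H0 H1].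
  split; [apply Rmult_le_pos; lra|].
  apply Rmult_le_compat_l with (r := 1 - y) in H1; [|lra].
  rewrite Rinv_r in H1; lra.
Qed.

Lemma proj_cons (w : Omega) (y : R) : 0 <= y < 1 ->
  proj y w = (1 - y) * b2R (w 0%nat) + y * proj y (S_shift w).
Proof.
  intros Hy. unfold proj. rewrite Series_incr_1 by (now apply ex_series_digits).
  replace (fun k => b2R (w (S k)) * y ^ S k)
    with (fun k => y * (b2R (S_shift w k) * y ^ k))
    by (apply functional_extensionality; intros; unfold S_shift; simpl; ring).
  rewrite Series_scal_l. simpl. ring.
Qed.

Lemma proj_head_false_le (w : Omega) (y : R) : 0 <= y < 1 ->
  w 0%nat = false -> proj y w <= y.
Proof.
  intros Hy Hw. rewrite proj_cons, Hw by exact Hy. simpl.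
  pose proof (proj_bounds (S_shift w) y Hy). nra.
Qed.

Lemma proj_head_true_ge (w : Omega) (y : R) : 0 <= y < 1 ->
  w 0%nat = true -> 1 - y <= proj y w.
Proof.
  intros Hy Hw. rewrite proj_cons, Hw by exact Hy. simpl.
  pose proof (proj_bounds (S_shift w) y Hy). nra.
Qed.

(* With [Sy], [Sz] the two digit series, [proj y w - proj z w] equals
   [(1 - y) (Sy - Sz) - (y - z) Sz], and both terms lie in [[0, (y - z)/(1 - z)]]. *)
Lemma proj_sub_le (w : Omega) (y z c : R) : 0 <= z <= y -> y <= c -> c < 1 ->
  Rabs (proj y w - proj z w) <= (y - z) / (1 - c).
Proof.
  intros Hzy Hyc Hc. unfold proj.
  set (Sy := Series (fun k => b2R (w k) * y ^ k)).
  set (Sz := Series (fun k => b2R (w k) * z ^ k)).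
  assert (Hgap : 0 <= Sy - Sz <= / (1 - y) - / (1 - z)).
  { unfold Sy, Sz.
    rewrite <- Series_minus by (apply ex_series_digits; lra).
    rewrite <- (is_series_unique _ _ (is_series_pow y ltac:(lra))),
            <- (is_series_unique _ _ (is_series_pow z ltac:(lra))).
    rewrite <- Series_minus by (eexists; apply is_series_pow; lra).
    split.
    - apply Series_nonneg.
      + intros n. pose proof (pow_incr z y n ltac:(lra)). pose proof (b2R_bounds (w n)). nra.
      + apply (ex_series_minus (fun k => b2R (w k) * y ^ k)); apply ex_series_digits; lra.
    - apply Series_le.
      + intros n. pose proof (pow_incr z y n ltac:(lra)). pose proof (b2R_bounds (w n)). nra.
      + apply (ex_series_minus (fun k => y ^ k)); eexists; apply is_series_pow; lra. }
  pose proof (Series_digits_bounds w z ltac:(lra)) as HSz. fold Sz in HSz.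
  assert (Hfirst : 0 <= (1 - y) * (Sy - Sz) <= (y - z) / (1 - z)).
  { split; [apply Rmult_le_pos; lra|].
    replace ((y - z) / (1 - z)) with ((1 - y) * (/ (1 - y) - / (1 - z))) by (field; lra).
    apply Rmult_le_compat_l; lra. }
  assert (Hsecond : 0 <= (y - z) * Sz <= (y - z) / (1 - z)).
  { split; [apply Rmult_le_pos; lra|]. apply Rmult_le_compat_l; lra. }
  assert ((y - z) / (1 - z) <= (y - z) / (1 - c)).
  { apply Rmult_le_compat_l; [lra|]. apply Rinv_le_contravar; lra. }
  replace ((1 - y) * Sy - (1 - z) * Sz) with ((1 - y) * (Sy - Sz) - (y - z) * Sz) by ring.
  apply Rabs_le. lra.
Qed.

Lemma proj_Lipschitz (w : Omega) (y z c : R) : 0 <= y <= c -> 0 <= z <= c -> c < 1 ->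
  Rabs (proj y w - proj z w) <= Rabs (y - z) / (1 - c).
Proof.
  intros Hy Hz Hc. destruct (Rle_dec z y).
  - rewrite (Rabs_pos_eq (y - z)) by lra. apply proj_sub_le; lra.
  - rewrite Rabs_minus_sym, (Rabs_minus_sym y), (Rabs_pos_eq (z - y)) by lra.
    apply proj_sub_le; lra.
Qed.

Lemma proj_close (w : Omega) (y z c e : R) : 0 <= y <= c -> 0 <= z <= c -> c < 1 ->
  Rabs (y - z) <= e * (1 - c) -> Rabs (proj y w - proj z w) <= e.
Proof.
  intros Hy Hz Hc Hyz. eapply Rle_trans; [now apply proj_Lipschitz|].
  apply Rmult_le_reg_r with (1 - c); [lra|].
  unfold Rdiv. rewrite Rmult_assoc, Rinv_l; lra.
Qed.

Lemma iter_shift_apply (n : nat) (w : Omega) (k : nat) :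
  Nat.iter n S_shift w k = w (n + k)%nat.
Proof.
  revert w k; induction n as [|n IH]; intros w k; [reflexivity|].
  simpl. unfold S_shift at 1. rewrite IH. f_equal. lia.
Qed.

Lemma proj_common_prefix (y : R) (n : nat) (w v : Omega) : 0 <= y < 1 ->
  (forall k, (k < n)%nat -> w k = v k) ->
  proj y w - proj y v =
  y ^ n * (proj y (Nat.iter n S_shift w) - proj y (Nat.iter n S_shift v)).
Proof.
  intros Hy. revert w v; induction n as [|n IH]; intros w v Hwv; [simpl; ring|].
  rewrite (proj_cons w), (proj_cons v), (Hwv 0%nat), !Nat.iter_succ_r by (lia || lra).
  transitivity (y * (proj y (S_shift w) - proj y (S_shift v))); [ring|].
  rewrite (IH (S_shift w) (S_shift v)) by (intros k Hk; apply Hwv; lia).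
  simpl. ring.
Qed.

Lemma lex_lt_total (w v : Omega) : w <> v -> lex_lt w v \/ lex_lt v w.
Proof.
  intros Hwv.
  destruct (dec_inh_nat_subset_has_unique_least_element (fun n => w n <> v n))
    as [n [[Hn Hmin] _]].
  - intros n. destruct (Bool.bool_dec (w n) (v n)); tauto.
  - apply Classical_Pred_Type.not_all_ex_not. intros Hall.
    apply Hwv, functional_extensionality. exact Hall.
  - assert (Hpre : forall k, (k < n)%nat -> w k = v k).
    { intros k Hk. destruct (Bool.bool_dec (w k) (v k)) as [|Hne]; auto.
      specialize (Hmin k Hne). lia. }
    destruct (w n) eqn:Ew, (v n) eqn:Ev; try congruence.
    + right. exists n. split; [|auto]. intros k Hk. symmetry. auto.
    + left. exists n. auto.
Qed.

Lemma lex_lt_head (w v : Omega) : w 0%nat = false -> v 0%nat = true -> lex_lt w v.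
Proof. intros Hw Hv. exists 0%nat. repeat split; auto. intros k Hk. lia. Qed.

Lemma Omega_ab_iter (al be w : Omega) (n : nat) :
  Omega_ab al be w -> Omega_ab al be (Nat.iter n S_shift w).
Proof.
  intros [Hw|Hw]; [left|right]; intros m; rewrite <- Nat.iter_add; apply Hw.
Qed.

Section Admissible.

Variables al be : Omega.
Hypothesis Had : admissible al be.

Lemma alpha_head : al 0%nat = false.
Proof. apply Had. Qed.

Lemma beta_head : be 0%nat = true.
Proof. apply Had. Qed.

Lemma alpha_in_Omega : Omega_ab al be al.
Proof. left. destruct Had as (_ & _ & _ & _ & Hal & _). exact Hal. Qed.

Lemma beta_in_Omega : Omega_ab al be be.
Proof. right. destruct Had as (_ & _ & _ & _ & _ & Hbe). exact Hbe. Qed.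

Lemma alpha_not_plus : ~ Omega_plus al be al.
Proof.
  intros H. apply (H 0%nat). split; [now right|].
  apply lex_lt_head; [apply alpha_head|apply beta_head].
Qed.

Lemma beta_not_minus : ~ Omega_minus al be be.
Proof.
  intros H. apply (H 0%nat). split; [|now right].
  apply lex_lt_head; [apply alpha_head|apply beta_head].
Qed.

Lemma head_false_lex_lt_alpha (u : Omega) :
  Omega_ab al be u -> u 0%nat = false -> u <> al -> lex_lt u al.
Proof.
  intros Hu Hu0 Hne. destruct (lex_lt_total u al Hne) as [|Hlt]; auto.
  assert (lex_lt u be) by (apply lex_lt_head; [exact Hu0|apply beta_head]).
  exfalso. destruct Hu as [Hu|Hu]; apply (Hu 0%nat); split; simpl; auto; now left.
Qed.

Lemma head_true_beta_lex_lt (v : Omega) :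
  Omega_ab al be v -> v 0%nat = true -> v <> be -> lex_lt be v.
Proof.
  intros Hv Hv1 Hne. destruct (lex_lt_total v be Hne) as [Hlt|]; auto.
  assert (lex_lt al v) by (apply lex_lt_head; [apply alpha_head|exact Hv1]).
  exfalso. destruct Hv as [Hv|Hv]; apply (Hv 0%nat); split; simpl; auto; now left.
Qed.

Definition heads_separated (y : R) : Prop :=
  forall u v, Omega_ab al be u -> Omega_ab al be v ->
  u 0%nat = false -> v 0%nat = true -> proj y u <= proj y v.

Definition separating (y : R) : Prop := heads_separated y /\ proj y al < proj y be.

Section Base.

Variable y : R.
Hypothesis Hy : 0 < y < 1.

(* Cut [u] and [al] at their first difference: the tails are then compared by
   [heads_separated], and the factor [y ^ n] is positive. *)
Lemma heads_separated_le_alpha (u : Omega) : heads_separated y ->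
  Omega_ab al be u -> u 0%nat = false -> proj y u <= proj y al.
Proof.
  intros Hsep Hu Hu0. destruct (Classical_Prop.classic (u = al)) as [->|Hne]; [lra|].
  destruct (head_false_lex_lt_alpha u Hu Hu0 Hne) as [n [Hpre [Hun Han]]].
  apply Rminus_le. rewrite (proj_common_prefix y n u al) by (auto || lra).
  pose proof (pow_lt y n ltac:(lra)).
  assert (proj y (Nat.iter n S_shift u) <= proj y (Nat.iter n S_shift al)); [|nra].
  apply Hsep; try apply Omega_ab_iter; auto; [apply alpha_in_Omega| |];
    now rewrite iter_shift_apply, Nat.add_0_r.
Qed.

Lemma heads_separated_beta_le (v : Omega) : heads_separated y ->
  Omega_ab al be v -> v 0%nat = true -> proj y be <= proj y v.
Proof.
  intros Hsep Hv Hv1. destruct (Classical_Prop.classic (v = be)) as [->|Hne]; [lra|].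
  destruct (head_true_beta_lex_lt v Hv Hv1 Hne) as [n [Hpre [Hbn Hvn]]].
  apply Rminus_le. rewrite (proj_common_prefix y n be v) by (auto || lra).
  pose proof (pow_lt y n ltac:(lra)).
  assert (proj y (Nat.iter n S_shift be) <= proj y (Nat.iter n S_shift v)); [|nra].
  apply Hsep; try apply Omega_ab_iter; auto; [apply beta_in_Omega| |];
    now rewrite iter_shift_apply, Nat.add_0_r.
Qed.

Lemma separating_lt_alpha (u : Omega) : separating y ->
  Omega_ab al be u -> u 0%nat = false -> u <> al -> proj y u < proj y al.
Proof.
  intros [Hsep Hab] Hu Hu0 Hne.
  destruct (head_false_lex_lt_alpha u Hu Hu0 Hne) as [n [Hpre [Hun Han]]].
  apply Rminus_lt.
  rewrite (proj_common_prefix y n u al) by (auto || lra).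
  pose proof (pow_lt y n ltac:(lra)).
  assert (proj y (Nat.iter n S_shift u) <= proj y al).
  { apply heads_separated_le_alpha; auto; [now apply Omega_ab_iter|].
    now rewrite iter_shift_apply, Nat.add_0_r. }
  assert (proj y be <= proj y (Nat.iter n S_shift al)).
  { apply heads_separated_beta_le; auto; [apply Omega_ab_iter, alpha_in_Omega|].
    now rewrite iter_shift_apply, Nat.add_0_r. }
  nra.
Qed.

Lemma separating_beta_lt (v : Omega) : separating y ->
  Omega_ab al be v -> v 0%nat = true -> v <> be -> proj y be < proj y v.
Proof.
  intros [Hsep Hab] Hv Hv1 Hne.
  destruct (head_true_beta_lex_lt v Hv Hv1 Hne) as [n [Hpre [Hbn Hvn]]].
  apply Rminus_lt.
  rewrite (proj_common_prefix y n be v) by (auto || lra).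
  pose proof (pow_lt y n ltac:(lra)).
  assert (proj y (Nat.iter n S_shift be) <= proj y al).
  { apply heads_separated_le_alpha; auto; [apply Omega_ab_iter, beta_in_Omega|].
    now rewrite iter_shift_apply, Nat.add_0_r. }
  assert (proj y be <= proj y (Nat.iter n S_shift v)).
  { apply heads_separated_beta_le; auto; [now apply Omega_ab_iter|].
    now rewrite iter_shift_apply, Nat.add_0_r. }
  nra.
Qed.

Lemma separating_threshold (p : R) : separating y -> proj y al <= p <= proj y be ->
  (forall w, Omega_plus al be w ->
     (w 0%nat = false -> proj y w < p) /\ (w 0%nat = true -> p <= proj y w)) /\
  (forall w, Omega_minus al be w ->
     (w 0%nat = false -> proj y w <= p) /\ (w 0%nat = true -> p < proj y w)).
Proof.
  intros Hsep Hp. split; intros w Hw; split; intros Hw0.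
  - assert (w <> al) by (intros ->; exact (alpha_not_plus Hw)).
    pose proof (separating_lt_alpha w Hsep (or_intror Hw) Hw0 H). lra.
  - pose proof (heads_separated_beta_le w (proj1 Hsep) (or_intror Hw) Hw0). lra.
  - pose proof (heads_separated_le_alpha w (proj1 Hsep) (or_introl Hw) Hw0). lra.
  - assert (w <> be) by (intros ->; exact (beta_not_minus Hw)).
    pose proof (separating_beta_lt w Hsep (or_introl Hw) Hw0 H). lra.
Qed.

End Base.

Lemma separating_half :
  ~ (exists x, 0 < x < 1 /\ proj x al = proj x be) -> separating (1/2).
Proof.
  intros Hne. split.
  - intros u v _ _ Hu0 Hv1.
    pose proof (proj_head_false_le u (1/2) ltac:(lra) Hu0).
    pose proof (proj_head_true_ge v (1/2) ltac:(lra) Hv1). lra.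
  - pose proof (proj_head_false_le al (1/2) ltac:(lra) alpha_head).
    pose proof (proj_head_true_ge be (1/2) ltac:(lra) beta_head).
    destruct (Req_dec (proj (1/2) al) (proj (1/2) be)) as [Heq|]; [|lra].
    exfalso. apply Hne. exists (1/2). split; [lra|exact Heq].
Qed.

(* The gap [proj y be - proj y al] bounds the distance from the words starting
   with 0 to those starting with 1, so it survives a perturbation of [y]. *)
Lemma separating_near (c y z : R) : 0 < y <= c -> 0 <= z <= c -> c < 1 ->
  separating y -> Rabs (z - y) <= (proj y be - proj y al) / 4 * (1 - c) ->
  separating z.
Proof.
  intros Hy Hz Hc Hsep Hzy. pose proof Hsep as [Hheads Hgap].
  assert (Hmove : forall w, Rabs (proj z w - proj y w) <= (proj y be - proj y al) / 4)
    by (intros w; apply proj_close with c; lra).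
  pose proof (Hmove al) as Hal. pose proof (Hmove be) as Hbe.
  apply Rabs_le_between in Hal, Hbe.
  split; [|lra].
  intros u v Hu Hv Hu0 Hv1.
  pose proof (heads_separated_le_alpha y ltac:(lra) u Hheads Hu Hu0).
  pose proof (heads_separated_beta_le y ltac:(lra) v Hheads Hv Hv1).
  pose proof (Hmove u) as Hmu. pose proof (Hmove v) as Hmv.
  apply Rabs_le_between in Hmu, Hmv. lra.
Qed.

End Admissible.

Lemma proj_le_left_limit (u v : Omega) (a m c : R) : 0 <= a < m -> m <= c < 1 ->
  (forall z, a <= z < m -> proj z u <= proj z v) -> proj m u <= proj m v.
Proof.
  intros Ham Hmc Hle. apply Rnot_lt_le. intros Hlt.
  set (e := (proj m u - proj m v) / 4).
  set (z := Rmax a (m - e * (1 - c))).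
  assert (He : 0 < e * (1 - c)) by (apply Rmult_lt_0_compat; unfold e; lra).
  assert (Hz : a <= z < m /\ Rabs (m - z) <= e * (1 - c)).
  { unfold z, Rmax. destruct (Rle_dec a (m - e * (1 - c))); split; try lra;
      rewrite Rabs_pos_eq; lra. }
  pose proof (proj_close u m z c e ltac:(lra) ltac:(lra) ltac:(lra) ltac:(lra)) as Hu.
  pose proof (proj_close v m z c e ltac:(lra) ltac:(lra) ltac:(lra) ltac:(lra)) as Hv.
  apply Rabs_le_between in Hu, Hv.
  pose proof (Hle z ltac:(lra)). unfold e in *. lra.
Qed.

Lemma real_induction (P : R -> Prop) (a b : R) : a <= b -> P a ->
  (forall m, a < m <= b -> (forall z, a <= z < m -> P z) -> P m) ->
  (forall y, a <= y < b -> P y ->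
     exists h, 0 < h /\ forall z, y <= z <= y + h -> z <= b -> P z) ->
  forall x, a <= x <= b -> P x.
Proof.
  intros Hab Ha Hclosed Hopen.
  set (E := fun t => a <= t <= b /\ forall z, a <= z <= t -> P z).
  destruct (completeness E) as [m [Hub Hlub]].
  { exists b. intros t Et. apply Et. }
  { exists a. split; [lra|]. intros z Hz. now replace z with a by lra. }
  assert (Ham : a <= m).
  { apply Hub. split; [lra|]. intros z Hz. now replace z with a by lra. }
  assert (Hmb : m <= b) by (apply Hlub; intros t Et; apply Et).
  assert (Hbelow : forall z, a <= z < m -> P z).
  { intros z Hz.
    destruct (Classical_Prop.classic (exists t, E t /\ z <= t)) as [[t [Et Hzt]]|Hno].
    - apply Et. lra.
    - exfalso. assert (m <= z); [|lra]. apply Hlub. intros t Et.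
      apply Rnot_lt_le. intros Hzt. apply Hno. exists t. split; [exact Et|lra]. }
  assert (Hm : P m).
  { destruct (Req_dec a m) as [<-|Hne]; [exact Ha|]. apply Hclosed; [lra|exact Hbelow]. }
  assert (Hm_eq_b : m = b).
  { destruct (Req_dec m b) as [|Hne]; [assumption|exfalso].
    destruct (Hopen m ltac:(lra) Hm) as [h [Hh Hstep]].
    assert (E (Rmin (m + h) b)) as Et.
    { split; [unfold Rmin; destruct (Rle_dec (m + h) b); lra|].
      intros z Hz. destruct (Rlt_le_dec z m); [apply Hbelow; lra|].
      apply Hstep; unfold Rmin in Hz; destruct (Rle_dec (m + h) b); lra. }
    pose proof (Hub _ Et). unfold Rmin in *. destruct (Rle_dec (m + h) b); lra. }
  intros x Hx. destruct (Req_dec x m) as [->|]; [exact Hm|]. apply Hbelow. lra.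
Qed.

Lemma separating_all (al be : Omega) : admissible al be ->
  ~ (exists x, 0 < x < 1 /\ proj x al = proj x be) ->
  forall x, 1/2 <= x < 1 -> separating al be x.
Proof.
  intros Had Hne x Hx.
  apply (real_induction (separating al be) (1/2) x); try lra.
  - now apply separating_half.
  - intros m Hm Hbelow. split.
    + intros u v Hu Hv Hu0 Hv1. apply (proj_le_left_limit u v (1/2) m x); try lra.
      intros z Hz. now apply (Hbelow z Hz).
    + assert (proj m al <= proj m be).
      { apply (proj_le_left_limit al be (1/2) m x); try lra.
        intros z Hz. apply Rlt_le, (Hbelow z Hz). }
      destruct (Req_dec (proj m al) (proj m be)) as [Heq|]; [|lra].
      exfalso. apply Hne. exists m. split; [lra|exact Heq].
  - intros y Hy Hsep. exists ((proj y be - proj y al) / 4 * (1 - x)). split.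
    + apply Rmult_lt_0_compat; [destruct Hsep; lra|lra].
    + intros z Hz Hzx. apply (separating_near al be Had x y z); try lra; [exact Hsep|].
      rewrite Rabs_pos_eq; lra.
Qed.

Lemma proj_shift (w : Omega) (a : R) : 1 < a ->
  proj (1 / a) (S_shift w) = a * proj (1 / a) w - (a - 1) * b2R (w 0%nat).
Proof.
  intros Ha. assert (0 <= 1 / a < 1).
  { split; [apply Rlt_le, Rdiv_lt_0_compat; lra|].
    apply Rmult_lt_reg_r with a; [lra|]. field_simplify; lra. }
  rewrite (proj_cons w) by assumption. field. lra.
Qed.

Lemma f_plus_proj (a p : R) (w : Omega) : 1 < a ->
  (w 0%nat = false -> proj (1 / a) w < p) -> (w 0%nat = true -> p <= proj (1 / a) w) ->
  f_plus a p (proj (1 / a) w) = proj (1 / a) (S_shift w).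
Proof.
  intros Ha H0 H1. rewrite proj_shift by exact Ha. unfold f_plus.
  destruct (w 0%nat); [specialize (H1 eq_refl)|specialize (H0 eq_refl)];
    destruct (Rlt_dec (proj (1 / a) w) p); simpl; lra.
Qed.

Lemma f_minus_proj (a p : R) (w : Omega) : 1 < a ->
  (w 0%nat = false -> proj (1 / a) w <= p) -> (w 0%nat = true -> p < proj (1 / a) w) ->
  f_minus a p (proj (1 / a) w) = proj (1 / a) (S_shift w).
Proof.
  intros Ha H0 H1. rewrite proj_shift by exact Ha. unfold f_minus.
  destruct (w 0%nat); [specialize (H1 eq_refl)|specialize (H0 eq_refl)];
    destruct (Rle_dec (proj (1 / a) w) p); simpl; lra.
Qed.

Theorem lemma2 (alpha beta : Omega) :
  admissible alpha beta ->
  non_null alpha beta ->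
  ~ (exists x, 0 < x < 1 /\ proj x alpha = proj x beta) ->
  forall a, 1 < a <= 2 ->
  exists p, 1 - 1 / a <= p <= 1 / a /\
    (forall w, Omega_plus alpha beta w ->
       f_plus a p (proj (1 / a) w) = proj (1 / a) (S_shift w)) /\
    (forall w, Omega_minus alpha beta w ->
       f_minus a p (proj (1 / a) w) = proj (1 / a) (S_shift w)).
Proof.
  intros Had _ Hne a Ha.
  assert (Hx : 1/2 <= 1 / a < 1).
  { unfold Rdiv. rewrite !Rmult_1_l. split.
    - apply Rinv_le_contravar; lra.
    - rewrite <- Rinv_1. apply Rinv_lt_contravar; lra. }
  pose proof (separating_all alpha beta Had Hne (1 / a) Hx) as Hsep.
  pose proof (proj_head_false_le alpha (1 / a) ltac:(lra) (alpha_head _ _ Had)).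
  pose proof (proj_head_true_ge beta (1 / a) ltac:(lra) (beta_head _ _ Had)).
  set (p := Rmax (proj (1 / a) alpha) (1 - 1 / a)).
  destruct (separating_threshold alpha beta Had (1 / a) ltac:(lra) p Hsep) as [Hplus Hminus].
  { destruct Hsep. split; [apply Rmax_l|apply Rmax_lub; lra]. }
  exists p. split; [split; [apply Rmax_r|apply Rmax_lub; lra]|split]; intros w Hw.
  - destruct (Hplus w Hw). now apply f_plus_proj.
  - destruct (Hminus w Hw). now apply f_minus_proj.
Qed.
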